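(* Let $N\ge5$. Define $s:(0,\infty)\to(0,\infty)$ by $s(r)=\left((N-2)\int_r^\infty(\sinh\sigma)^{1-N}d\sigma\right)^{-\frac{1}{N-2}}$, so that $\frac{ds}{s^{N-1}}=\frac{dr}{(\sinh r)^{N-1}}$, let $r=r(s)$ be its inverse, and set $\rho(s)=\left(\frac{\sinh r(s)}{s}\right)^{2(N-1)}$. Then for every $v\in C_c^\infty(0,\infty)$, $$\int_0^\infty\frac{1}{\rho(s)}(\Delta v)^2s^{N-1}ds\ge\frac{(N-1)^4}{16}\int_0^\infty\rho(s)v^2s^{N-1}ds+\frac{9}{16}\int_0^\infty\frac{\rho(s)}{r^4(s)}v^2s^{N-1}ds+\frac{(N-1)^2}{8}\int_0^\infty\frac{\rho(s)}{r^2(s)}v^2s^{N-1}ds,$$ where $\Delta v(s)=v''(s)+\frac{N-1}{s}v'(s)$ is the radial Euclidean Laplacian in $\mathbb{R}^N$. *)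

From Stdlib Require Import Reals ClassicalEpsilon.
From Coquelicot Require Import Coquelicot.
Open Scope R_scope.

Definition tail_int (N : nat) (r : R) : R :=
  real (Lim (fun T => RInt (fun sg => / (sinh sg) ^ (N - 1)) r T) p_infty).

Definition s_of (N : nat) (r : R) : R :=
  Rpower (INR (N - 2) * tail_int N r) (- / INR (N - 2)).

Definition r_of (N : nat) (s : R) : R :=
  epsilon (inhabits 0) (fun r => 0 < r /\ s_of N r = s).

Definition rho (N : nat) (s : R) : R :=
  (sinh (r_of N s) / s) ^ (2 * (N - 1)).

Definition lap (N : nat) (v : R -> R) (s : R) : R :=
  Derive_n v 2 s + INR (N - 1) / s * Derive v s.

Definition smooth (v : R -> R) : Prop := forall (k : nat) (x : R), ex_derive_n v k x.

(* Under the substitution [s = s(r)], i.e. [ds / s^(N-1) = dr / sinh^(N-1) r], the function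
   [u = v o s] satisfies [(1/rho) (lap v)^2 s^(N-1) ds = (L u)^2 sinh^(N-1) r dr], where
   [L u = u'' + (N-1) coth r u'] is the radial Laplacian of hyperbolic space, and
   [rho v^2 s^(N-1) ds = u^2 sinh^(N-1) r dr]. The claim is therefore the radial Rellich
   inequality on hyperbolic space for [u], which holds pointwise up to an exact derivative:
   with [n = N-1], the integrand [(L u)^2 - n^4/16 u^2 - 9/16 u^2/r^4 - n^2/8 u^2/r^2] is a
   sum of squares, nonnegative as soon as [n >= 4], plus [sinh^(-n) (sinh^n Phi)'] for a flux
   [Phi] that vanishes wherever [u] and [u'] do, in particular at the ends of the support. *)

From Stdlib Require Import Reals Lra Lia ClassicalEpsilon.
From Coquelicot Require Import Coquelicot.
Open Scope R_scope.

(* Coquelicot's lemmas for an arbitrary normed module, specialized to [R -> R] so that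
   [apply] can infer the module structure and match [*] rather than [scal]. *)
Lemma ex_RInt_R (f : R -> R) a b :
  (forall z, Rmin a b <= z <= Rmax a b -> continuous f z) -> ex_RInt f a b.
Proof. exact (ex_RInt_continuous f a b). Qed.

Lemma ex_derive_continuous_R (f : R -> R) x : ex_derive f x -> continuous f x.
Proof. exact (ex_derive_continuous f x). Qed.

Lemma RInt_Chasles_R (f : R -> R) a b c :
  ex_RInt f a b -> ex_RInt f b c -> RInt f a b + RInt f b c = RInt f a c.
Proof. exact (RInt_Chasles f a b c). Qed.

Lemma RInt_correct_R (f : R -> R) a b : ex_RInt f a b -> is_RInt f a b (RInt f a b).
Proof. exact (RInt_correct f a b). Qed.

Lemma RInt_comp_R (f g dg : R -> R) a b :
  (forall x, Rmin a b <= x <= Rmax a b -> continuous f (g x)) ->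
  (forall x, Rmin a b <= x <= Rmax a b -> is_derive g x (dg x) /\ continuous dg x) ->
  RInt (fun y => dg y * f (g y)) a b = RInt f (g a) (g b).
Proof. exact (RInt_comp f g dg a b). Qed.

Lemma locally_pos r : 0 < r -> locally r (fun y => 0 < y).
Proof.
  intros Hr; exists (mkposreal r Hr); intros y Hy.
  unfold ball in Hy; simpl in Hy; unfold AbsRing_ball, abs, minus, plus, opp in Hy; simpl in Hy.
  apply Rabs_lt_between in Hy; lra.
Qed.

Lemma continuity_pt_pow_comp (f : R -> R) k x :
  continuity_pt f x -> continuity_pt (fun y => f y ^ k) x.
Proof.
  intros Hf. apply (continuity_pt_comp f (fun z => z ^ k)); [assumption |].
  apply derivable_continuous_pt, derivable_pt_pow.
Qed.

(* [continuity_pt_pow_comp] must be tried before [continuity_pt_mult], which also matches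
   [f y ^ k] by unfolding [pow]. *)
Ltac continuity_pt_tac :=
  repeat first
    [ assumption
    | solve [apply continuity_pt_const; intros ? ?; reflexivity]
    | apply continuity_pt_id
    | apply continuity_pt_pow_comp
    | apply continuity_pt_plus
    | apply continuity_pt_minus
    | apply continuity_pt_opp
    | apply continuity_pt_mult
    | apply continuity_pt_inv ].

Lemma continuity_pt_Derive_n v k x : smooth v -> continuity_pt (Derive_n v k) x.
Proof. intros Hv; apply continuity_pt_filterlim, ex_derive_continuous_R, (Hv (S k)). Qed.

Lemma RInt_sub_lin3 (f g1 g2 g3 : R -> R) k1 k2 k3 a b :
  ex_RInt f a b -> ex_RInt g1 a b -> ex_RInt g2 a b -> ex_RInt g3 a b ->
  RInt (fun x => f x - (k1 * g1 x + k2 * g2 x + k3 * g3 x)) a b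
  = RInt f a b - (k1 * RInt g1 a b + k2 * RInt g2 a b + k3 * RInt g3 a b).
Proof.
  intros Hf H1 H2 H3. apply is_RInt_unique.
  apply (is_RInt_minus (V := R_NormedModule)); [now apply RInt_correct_R |].
  apply (is_RInt_plus (V := R_NormedModule)); [apply (is_RInt_plus (V := R_NormedModule)) |];
    apply (is_RInt_scal (V := R_NormedModule)); now apply RInt_correct_R.
Qed.

(* [r |-> RInt h ra r - flux r] has derivative [q >= 0], so it is nondecreasing. *)
Lemma RInt_ge_0_of_flux (h flux q : R -> R) ra rb :
  0 < ra < rb ->
  (forall r, 0 < r -> continuous h r) ->
  (forall r, 0 < r -> is_derive flux r (h r - q r)) ->
  (forall r, 0 < r -> 0 <= q r) ->
  flux ra = 0 -> flux rb = 0 -> 0 <= RInt h ra rb.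
Proof.
  intros Hr Hh Hflux Hq Ha Hb.
  assert (Hd : forall x, 0 < x -> is_derive (fun r => RInt h ra r - flux r) x (q x)).
  { intros x Hx.
    assert (Hi : is_derive (fun r => RInt h ra r) x (h x)).
    { apply (is_derive_RInt (V := R_NormedModule) h _ ra x); [| now apply Hh].
      apply (filter_imp (fun y => 0 < y)); [| now apply locally_pos].
      intros y Hy; apply RInt_correct_R, ex_RInt_R; intros z Hz; apply Hh.
      pose proof (Rmin_glb_lt ra y 0 (proj1 Hr) Hy); lra. }
    replace (q x) with (h x - (h x - q x)) by ring.
    apply (is_derive_minus (fun r => RInt h ra r) flux); [exact Hi | now apply Hflux]. }
  destruct (MVT_gen (fun r => RInt h ra r - flux r) ra rb q) as [c [Hc Hmvt]].
  - intros x Hx; rewrite Rmin_left in Hx by lra; apply Hd; lra.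
  - intros x Hx; rewrite Rmin_left in Hx by lra.
    apply continuity_pt_filterlim, (ex_derive_continuous_R (fun r => RInt h ra r - flux r)).
    exists (q x); apply Hd; lra.
  - rewrite Rmin_left in Hc by lra. rewrite Ha, Hb, RInt_point in Hmvt.
    pose proof (Hq c ltac:(lra)). unfold zero in Hmvt; simpl in Hmvt. nra.
Qed.

Lemma smooth_support_boundary v a b c :
  smooth v -> (forall x, x < a \/ b < x -> v x = 0) -> c = a \/ c = b ->
  v c = 0 /\ Derive v c = 0.
Proof.
  intros Hv Hsupp Hc.
  assert (Hnear : forall d, 0 < d -> exists x, Rabs (x - c) < d /\ v x = 0 /\ Derive v x = 0).
  { intros d Hd.
    assert (Hx : exists x, Rabs (x - c) < d /\ forall y, Rabs (y - x) < d / 2 -> y < a \/ b < y).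
    { destruct Hc as [-> | ->]; [exists (a - d / 2) | exists (b + d / 2)];
        (split; [apply Rabs_lt_between; lra |]);
        intros y Hy; apply Rabs_lt_between in Hy; lra. }
    destruct Hx as [x [Hxc Hout]].
    exists x; repeat split; [assumption | apply Hsupp, Hout; rewrite Rminus_eq_0, Rabs_R0; lra |].
    rewrite (Derive_ext_loc v (fun _ => 0)); [apply Derive_const |].
    exists (mkposreal (d / 2) ltac:(lra)); intros y Hy; apply Hsupp, Hout, Hy. }
  assert (Hzero : forall g : R -> R, continuity_pt g c ->
            (forall d, 0 < d -> exists x, Rabs (x - c) < d /\ g x = 0) -> g c = 0).
  { intros g Hg Hg0. destruct (Req_dec (g c) 0) as [| Hne]; [assumption | exfalso].
    destruct (Hg (Rabs (g c)) ltac:(now apply Rabs_pos_lt)) as [d [Hd Hball]].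
    destruct (Hg0 d Hd) as [x [Hxc Hgx]].
    destruct (Req_dec x c) as [-> | Hxc']; [lra |].
    assert (Hlt := Hball x (conj (conj I (not_eq_sym Hxc')) Hxc)).
    simpl in Hlt; unfold R_dist in Hlt; rewrite Hgx, Rminus_0_l, Rabs_Ropp in Hlt; lra. }
  split; apply Hzero.
  - exact (continuity_pt_Derive_n v 0 c Hv).
  - intros d Hd; destruct (Hnear d Hd) as [x [? [? _]]]; now exists x.
  - exact (continuity_pt_Derive_n v 1 c Hv).
  - intros d Hd; destruct (Hnear d Hd) as [x [? [_ ?]]]; now exists x.
Qed.

(** * Improper integrals of positive functions *)

Definition improper_RInt (f : R -> R) (r : R) : R :=
  real (Lim (fun T => RInt f r T) p_infty).

Section ImproperIntegral.

Variables f B : R -> R.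
Hypothesis f_pos : forall x, 0 < x -> 0 < f x.
Hypothesis f_cont : forall x, 0 < x -> continuous f x.
Hypothesis RInt_f_le : forall x y, 1 <= x <= y -> RInt f x y <= B x.

Lemma ex_RInt_pos x y : 0 < x -> 0 < y -> ex_RInt f x y.
Proof.
  intros Hx Hy; apply ex_RInt_R; intros z Hz; apply f_cont.
  pose proof (Rmin_glb_lt x y 0 Hx Hy); lra.
Qed.

Lemma RInt_pos_ge_0 x y : 0 < x <= y -> 0 <= RInt f x y.
Proof.
  intros Hxy; apply RInt_ge_0; [lra | apply ex_RInt_pos; lra |].
  intros z Hz; left; apply f_pos; lra.
Qed.

Lemma RInt_Chasles_pos x y z :
  0 < x -> 0 < y -> 0 < z -> RInt f x y + RInt f y z = RInt f x z.
Proof. intros; apply RInt_Chasles_R; apply ex_RInt_pos; assumption. Qed.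

Lemma ex_lim_seq_RInt_from_1 :
  exists l : R, is_lim_seq (fun n => RInt f 1 (INR n + 1)) l.
Proof.
  pose proof pos_INR as HINR.
  set (u n := RInt f 1 (INR n + 1)).
  assert (Hincr : forall n, u n <= u (S n)).
  { intros n; unfold u; rewrite S_INR.
    rewrite <- (RInt_Chasles_pos 1 (INR n + 1) (INR n + 1 + 1)) by (specialize (HINR n); lra).
    assert (0 <= RInt f (INR n + 1) (INR n + 1 + 1)); [|lra].
    apply RInt_pos_ge_0; specialize (HINR n); lra. }
  pose proof (Lim_seq_correct u (ex_lim_seq_incr u Hincr)) as Hlim.
  assert (Hle := is_lim_seq_le u (fun _ => B 1) _ _
    (fun n => RInt_f_le 1 (INR n + 1) ltac:(specialize (HINR n); lra)) Hlim (is_lim_seq_const _)).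
  assert (Hge := is_lim_seq_le (fun _ => 0) u _ _
    (fun n => RInt_pos_ge_0 1 (INR n + 1) ltac:(specialize (HINR n); lra)) (is_lim_seq_const _) Hlim).
  destruct (Lim_seq u) as [l| |]; simpl in Hle, Hge; try contradiction.
  now exists l.
Qed.

(* [Lim g p_infty] is by definition [Lim_seq (fun n => g (INR n))]. *)
Lemma is_lim_seq_RInt r :
  0 < r -> is_lim_seq (fun n => RInt f r (INR n)) (improper_RInt f r).
Proof.
  intros Hr. destruct ex_lim_seq_RInt_from_1 as [l Hl].
  assert (H : is_lim_seq (fun n => RInt f r (INR n)) (RInt f r 1 + l)).
  { apply is_lim_seq_incr_1.
    apply (is_lim_seq_ext (fun n => RInt f r 1 + RInt f 1 (INR n + 1))).
    - intros n; rewrite S_INR; apply RInt_Chasles_pos; pose proof (pos_INR n); lra.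
    - apply is_lim_seq_plus'; [apply is_lim_seq_const | exact Hl]. }
  unfold improper_RInt, Lim; simpl.
  now rewrite (is_lim_seq_unique _ _ H).
Qed.

Lemma improper_RInt_Chasles r :
  0 < r -> improper_RInt f r = RInt f r 1 + improper_RInt f 1.
Proof.
  intros Hr.
  assert (H : is_lim_seq (fun n => RInt f r (INR n)) (RInt f r 1 + improper_RInt f 1)).
  { apply (is_lim_seq_ext_loc (fun n => RInt f r 1 + RInt f 1 (INR n))).
    - exists 1%nat; intros n Hn; apply RInt_Chasles_pos; try lra.
      apply (lt_INR 0); lia.
    - apply is_lim_seq_plus'; [apply is_lim_seq_const | apply is_lim_seq_RInt; lra]. }
  pose proof (is_lim_seq_unique _ _ H) as E1.
  pose proof (is_lim_seq_unique _ _ (is_lim_seq_RInt r Hr)) as E2.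
  rewrite E1 in E2; now injection E2.
Qed.

Lemma improper_RInt_ge_0 r : 0 < r -> 0 <= improper_RInt f r.
Proof.
  intros Hr. destruct (INR_unbounded r) as [K HK].
  apply (is_lim_seq_le_loc (fun _ => 0) (fun n => RInt f r (INR n)) 0 (improper_RInt f r));
    [| apply is_lim_seq_const | now apply is_lim_seq_RInt].
  exists K; intros n Hn; apply RInt_pos_ge_0; apply le_INR in Hn; lra.
Qed.

Lemma improper_RInt_decreasing x y : 0 < x < y -> improper_RInt f y < improper_RInt f x.
Proof.
  intros Hxy.
  rewrite (improper_RInt_Chasles x), (improper_RInt_Chasles y) by lra.
  rewrite <- (RInt_Chasles_pos x y 1) by lra.
  assert (0 < RInt f x y).
  { apply RInt_gt_0; [lra | intros; apply f_pos; lra | intros; apply f_cont; lra]. }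
  lra.
Qed.

Lemma improper_RInt_pos r : 0 < r -> 0 < improper_RInt f r.
Proof.
  intros Hr; pose proof (improper_RInt_decreasing r (r + 1)); pose proof (improper_RInt_ge_0 (r + 1)).
  lra.
Qed.

Lemma improper_RInt_le r : 1 <= r -> improper_RInt f r <= B r.
Proof.
  intros Hr. destruct (INR_unbounded r) as [K HK].
  apply (is_lim_seq_le_loc (fun n => RInt f r (INR n)) (fun _ => B r) (improper_RInt f r) (B r));
    [| apply is_lim_seq_RInt; lra | apply is_lim_seq_const].
  exists K; intros n Hn; apply RInt_f_le; apply le_INR in Hn; lra.
Qed.

Lemma improper_RInt_ge r : 0 < r -> RInt f r 1 <= improper_RInt f r.
Proof.
  intros Hr; rewrite improper_RInt_Chasles by lra.
  pose proof (improper_RInt_ge_0 1); lra.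
Qed.

Lemma is_derive_improper_RInt r : 0 < r -> is_derive (improper_RInt f) r (- f r).
Proof.
  intros Hr.
  assert (Hloc : locally r (fun y => 0 < y)) by now apply locally_pos.
  apply (is_derive_ext_loc (fun x => RInt f x 1 + improper_RInt f 1)).
  { apply (filter_imp (fun y => 0 < y)); [| exact Hloc].
    intros y Hy; symmetry; now apply improper_RInt_Chasles. }
  assert (H : is_derive (fun x => RInt f x 1) r (- f r)).
  { apply (is_derive_RInt' (V := R_NormedModule) f _ r 1); [| now apply f_cont].
    apply (filter_imp (fun y => 0 < y)); [| exact Hloc].
    intros y Hy; apply RInt_correct_R, ex_RInt_pos; lra. }
  rewrite <- (Rplus_0_r (- f r)).
  exact (is_derive_plus _ _ _ _ _ H (is_derive_const _ _)).
Qed.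

End ImproperIntegral.

(** * The kernel [sinh^(1-N)] and the substitution [s = s(r)] *)

Lemma sinh_pos x : 0 < x -> 0 < sinh x.
Proof. intros; rewrite <- sinh_0; now apply sinh_lt. Qed.

Lemma exp_le_compat x y : x <= y -> exp x <= exp y.
Proof. intros [H | ->]; [left; now apply exp_increasing | apply Rle_refl]. Qed.

Lemma sinh_le_twice x : 0 <= x <= 1 -> sinh x <= 2 * x.
Proof.
  intros Hx. destruct (Req_dec x 0) as [->|Hx0]; [rewrite sinh_0; lra |].
  destruct (MVT_gen (fun y => 2 * y - sinh y) 0 x (fun y => 2 - cosh y)) as [c [Hc Hd]].
  - intros y _. unfold sinh, cosh. auto_derive; auto; field.
  - intros y _. apply continuity_pt_minus; [reg |].
    apply derivable_continuous_pt, derivable_pt_sinh.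
  - rewrite Rmin_left, Rmax_right in Hc by lra. rewrite sinh_0 in Hd.
    assert (cosh c <= 2).
    { unfold cosh. pose proof exp_le_3.
      assert (exp c <= exp 1) by (apply exp_le_compat; lra).
      assert (exp (- c) <= exp 0) by (apply exp_le_compat; lra).
      rewrite exp_0 in *; lra. }
    nra.
Qed.

Lemma exp_le_4_sinh x : 1 <= x -> exp x <= 4 * sinh x.
Proof.
  intros Hx. unfold sinh.
  assert (exp (- x) <= exp 0) by (apply exp_le_compat; lra).
  pose proof (exp_ineq1_le x). rewrite exp_0 in *; lra.
Qed.

Definition csch_pow (N : nat) (x : R) : R := / sinh x ^ (N - 1).

Section CschPow.

Variable N : nat.
Hypothesis HN : (3 <= N)%nat.

Lemma csch_pow_pos x : 0 < x -> 0 < csch_pow N x.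
Proof. intros; apply Rinv_0_lt_compat, pow_lt, sinh_pos; assumption. Qed.

Lemma ex_derive_csch_pow x : 0 < x -> ex_derive (csch_pow N) x.
Proof.
  intros Hx. pose proof (sinh_pos x Hx). unfold csch_pow, sinh in *.
  auto_derive. apply pow_nonzero; lra.
Qed.

Lemma continuous_csch_pow x : 0 < x -> continuous (csch_pow N) x.
Proof. intros; now apply ex_derive_continuous_R, ex_derive_csch_pow. Qed.

Lemma csch_pow_le_exp x : 1 <= x -> csch_pow N x <= 4 ^ (N - 1) * exp (- x).
Proof.
  intros Hx. unfold csch_pow.
  assert (Hs : 0 < sinh x) by (apply sinh_pos; lra).
  assert (H1 := exp_le_4_sinh x Hx).
  assert (Hpow : exp x ^ (N - 1) <= (4 * sinh x) ^ (N - 1)).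
  { apply pow_incr; pose proof (exp_pos x); lra. }
  assert (Hexp : exp x <= exp x ^ (N - 1)).
  { rewrite <- (pow_1 (exp x)) at 1; apply Rle_pow; [| lia].
    pose proof (exp_ineq1_le x); lra. }
  assert (exp x * exp (- x) = 1) by (rewrite <- exp_plus, Rplus_opp_r; apply exp_0).
  rewrite Rpow_mult_distr in Hpow.
  assert (0 < sinh x ^ (N - 1)) by (apply pow_lt; lra).
  pose proof (exp_pos (- x)).
  apply (Rmult_le_reg_r (sinh x ^ (N - 1))); [assumption |].
  rewrite Rinv_l by lra. nra.
Qed.

Lemma csch_pow_ge_inv_sq x : 0 < x <= 1 -> / 2 ^ (N - 1) * / x ^ 2 <= csch_pow N x.
Proof.
  intros Hx. unfold csch_pow.
  assert (Hs := sinh_pos x (proj1 Hx)).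
  assert (H1 : sinh x ^ (N - 1) <= (2 * x) ^ (N - 1)).
  { apply pow_incr; split; [lra | apply sinh_le_twice; lra]. }
  assert (H2 : x ^ (N - 1) <= x ^ 2).
  { replace (N - 1)%nat with (2 + (N - 3))%nat by lia. rewrite pow_add.
    assert (x ^ (N - 3) <= 1) by (rewrite <- (pow1 (N - 3)); apply pow_incr; lra).
    assert (0 < x ^ 2) by (apply pow_lt; lra). nra. }
  rewrite Rpow_mult_distr in H1.
  assert (0 < 2 ^ (N - 1)) by (apply pow_lt; lra).
  assert (0 < sinh x ^ (N - 1)) by (apply pow_lt; lra).
  rewrite <- Rinv_mult. apply Rinv_le_contravar; [assumption | nra].
Qed.

Lemma RInt_csch_pow_le x y : 1 <= x <= y -> RInt (csch_pow N) x y <= 4 ^ (N - 1) * exp (- x).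
Proof.
  intros Hxy.
  assert (Hexp : forall z, continuous (fun s => 4 ^ (N - 1) * exp (- s)) z).
  { intros z; apply ex_derive_continuous_R; auto_derive; auto. }
  apply Rle_trans with (RInt (fun s => 4 ^ (N - 1) * exp (- s)) x y).
  - apply RInt_le; [lra | | apply ex_RInt_R; intros; apply Hexp |].
    + apply ex_RInt_R; intros z Hz; apply continuous_csch_pow.
      rewrite Rmin_left in Hz; lra.
    + intros z Hz; apply csch_pow_le_exp; lra.
  - assert (E : is_RInt (fun s => 4 ^ (N - 1) * exp (- s)) x y
                 (4 ^ (N - 1) * exp (- x) - 4 ^ (N - 1) * exp (- y))).
    { replace (4 ^ (N - 1) * exp (- x) - 4 ^ (N - 1) * exp (- y))
        with ((- 4 ^ (N - 1) * exp (- y)) - (- 4 ^ (N - 1) * exp (- x))) by ring.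
      apply (is_RInt_derive (fun s => - 4 ^ (N - 1) * exp (- s))).
      + intros z _; auto_derive; auto; ring.
      + intros z _; apply Hexp. }
    rewrite (is_RInt_unique _ _ _ _ E).
    pose proof (exp_pos (- y)); pose proof (pow_lt 4 (N - 1)); nra.
Qed.

Lemma RInt_csch_pow_ge r : 0 < r <= 1 -> / 2 ^ (N - 1) * (/ r - 1) <= RInt (csch_pow N) r 1.
Proof.
  intros Hr.
  assert (Hcont : forall z, r <= z -> continuous (fun s => / 2 ^ (N - 1) * / s ^ 2) z).
  { intros z Hz; apply ex_derive_continuous_R; auto_derive; intro; nra. }
  assert (E : is_RInt (fun s => / 2 ^ (N - 1) * / s ^ 2) r 1 (/ 2 ^ (N - 1) * (/ r - 1))).
  { replace (/ 2 ^ (N - 1) * (/ r - 1))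
      with (- / 2 ^ (N - 1) * / 1 - (- / 2 ^ (N - 1) * / r)) by (field; split; [lra | apply pow_nonzero; lra]).
    apply (is_RInt_derive (fun s => - / 2 ^ (N - 1) * / s)).
    - intros z Hz; rewrite Rmin_left in Hz by lra.
      auto_derive; [lra | field; split; [lra | apply pow_nonzero; lra]].
    - intros z Hz; rewrite Rmin_left in Hz by lra; apply Hcont; lra. }
  rewrite <- (is_RInt_unique _ _ _ _ E).
  apply RInt_le; [lra | apply ex_RInt_R; intros z Hz; apply Hcont; rewrite Rmin_left in Hz; lra | |].
  - apply ex_RInt_R; intros z Hz; apply continuous_csch_pow; rewrite Rmin_left in Hz; lra.
  - intros z Hz; apply csch_pow_ge_inv_sq; lra.
Qed.

End CschPow.

Section Substitution.

Variable N : nat.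
Hypothesis HN : (3 <= N)%nat.

Lemma tail_int_pos r : 0 < r -> 0 < tail_int N r.
Proof.
  exact (improper_RInt_pos _ _ (csch_pow_pos N) (continuous_csch_pow N) (RInt_csch_pow_le N HN) r).
Qed.

Lemma tail_int_le_exp r : 1 <= r -> tail_int N r <= 4 ^ (N - 1) * exp (- r).
Proof.
  exact (improper_RInt_le _ _ (csch_pow_pos N) (continuous_csch_pow N) (RInt_csch_pow_le N HN) r).
Qed.

Lemma tail_int_ge r : 0 < r <= 1 -> / 2 ^ (N - 1) * (/ r - 1) <= tail_int N r.
Proof.
  intros Hr; eapply Rle_trans; [now apply RInt_csch_pow_ge |].
  exact (improper_RInt_ge _ _ (csch_pow_pos N) (continuous_csch_pow N) (RInt_csch_pow_le N HN)
    r (proj1 Hr)).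
Qed.

Lemma is_derive_tail_int r : 0 < r -> is_derive (tail_int N) r (- csch_pow N r).
Proof.
  exact (is_derive_improper_RInt _ _ (csch_pow_pos N) (continuous_csch_pow N)
    (RInt_csch_pow_le N HN) r).
Qed.

Lemma tail_int_decreasing x y : 0 < x < y -> tail_int N y < tail_int N x.
Proof.
  exact (improper_RInt_decreasing _ _ (csch_pow_pos N) (continuous_csch_pow N)
    (RInt_csch_pow_le N HN) x y).
Qed.

Lemma tail_int_unbounded K : exists r, 0 < r /\ K < tail_int N r.
Proof.
  assert (H2 : 0 < 2 ^ (N - 1)) by (apply pow_lt; lra).
  set (r := / (2 ^ (N - 1) * (Rabs K + 1) + 1)).
  assert (Hr : 0 < r <= 1).
  { pose proof (Rabs_pos K). unfold r; split.
    - apply Rinv_0_lt_compat; nra.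
    - rewrite <- Rinv_1; apply Rinv_le_contravar; nra. }
  exists r; split; [lra |].
  eapply Rlt_le_trans; [| now apply tail_int_ge].
  unfold r; rewrite Rinv_inv.
  replace (/ 2 ^ (N - 1) * (2 ^ (N - 1) * (Rabs K + 1) + 1 - 1)) with (Rabs K + 1)
    by (field; lra).
  pose proof (Rle_abs K); lra.
Qed.

Lemma tail_int_small K : 0 < K -> exists r, 0 < r /\ tail_int N r < K.
Proof.
  intros HK.
  assert (H4 : 0 < 4 ^ (N - 1)) by (apply pow_lt; lra).
  set (r := 4 ^ (N - 1) / K + 1).
  assert (Hr : 1 <= r) by (unfold r; pose proof (Rdiv_lt_0_compat _ _ H4 HK); lra).
  exists r; split; [lra |].
  eapply Rle_lt_trans; [now apply tail_int_le_exp |].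
  assert (Hexp : exp r * exp (- r) = 1) by (rewrite <- exp_plus, Rplus_opp_r; apply exp_0).
  pose proof (exp_ineq1_le r); pose proof (exp_pos (- r)).
  assert (4 ^ (N - 1) = K * (r - 1)) by (unfold r; field; lra).
  nra.
Qed.

Lemma tail_int_surj K : 0 < K -> exists r, 0 < r /\ tail_int N r = K.
Proof.
  intros HK.
  destruct (tail_int_unbounded K) as [r1 [Hr1 H1]].
  destruct (tail_int_small K HK) as [r2 [Hr2 H2]].
  assert (Hr12 : r1 < r2).
  { destruct (Rlt_le_dec r1 r2) as [| [Hlt | <-]]; [assumption | | lra].
    pose proof (tail_int_decreasing r2 r1); lra. }
  destruct (Ranalysis5.IVT_interv (fun r => K - tail_int N r) r1 r2) as [r [Hr Hr']];
    [| assumption | lra | lra | exists r; split; lra].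
  intros x Hx; apply continuity_pt_minus; [apply continuity_pt_const; now intros ? ? |].
  apply continuity_pt_filterlim, ex_derive_continuous_R.
  exists (- csch_pow N x); apply is_derive_tail_int; lra.
Qed.

Lemma s_of_pos r : 0 < s_of N r.
Proof. apply exp_pos. Qed.

Lemma s_of_pow r : 0 < r -> s_of N r ^ (N - 2) = / (INR (N - 2) * tail_int N r).
Proof.
  intros Hr.
  assert (0 < INR (N - 2)) by (apply lt_0_INR; lia).
  assert (0 < tail_int N r) by now apply tail_int_pos.
  rewrite <- Rpower_pow by apply s_of_pos. unfold s_of.
  rewrite Rpower_mult, Ropp_mult_distr_l_reverse, Rinv_l, Rpower_Ropp, Rpower_1 by nra.
  reflexivity.
Qed.

Definition s_deriv (r : R) : R := s_of N r ^ (N - 1) * csch_pow N r.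

Lemma s_deriv_pos r : 0 < r -> 0 < s_deriv r.
Proof. intros; apply Rmult_lt_0_compat; [apply pow_lt, s_of_pos | now apply csch_pow_pos]. Qed.

Lemma is_derive_s_of r : 0 < r -> is_derive (s_of N) r (s_deriv r).
Proof.
  intros Hr.
  assert (0 < INR (N - 2)) by (apply lt_0_INR; lia).
  assert (0 < tail_int N r) by now apply tail_int_pos.
  assert (Hd := is_derive_tail_int r Hr).
  unfold s_deriv. replace (N - 1)%nat with (S (N - 2)) by lia.
  rewrite <- tech_pow_Rmult, s_of_pow by assumption.
  unfold s_of, Rpower. auto_derive.
  - repeat split; [now exists (- csch_pow N r) | nra].
  - replace (Derive (fun x => tail_int N x) r) with (- csch_pow N r)
      by (symmetry; now apply is_derive_unique).
    field; lra.
Qed.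

Lemma continuous_s_of r : 0 < r -> continuous (s_of N) r.
Proof. intros; apply ex_derive_continuous_R; eexists; now apply is_derive_s_of. Qed.

Lemma s_of_lt x y : 0 < x -> x < y -> s_of N x < s_of N y.
Proof.
  intros Hx Hxy.
  destruct (MVT_gen (s_of N) x y s_deriv) as [c [Hc Hd]].
  - intros z Hz; rewrite Rmin_left in Hz by lra; apply is_derive_s_of; lra.
  - intros z Hz; rewrite Rmin_left in Hz by lra.
    apply continuity_pt_filterlim, continuous_s_of; lra.
  - rewrite Rmin_left in Hc by lra. pose proof (s_deriv_pos c ltac:(lra)). nra.
Qed.

Lemma s_of_lt_iff x y : 0 < x -> 0 < y -> (s_of N x < s_of N y <-> x < y).
Proof.
  intros Hx Hy; split; [| now apply s_of_lt].
  intros Hs; destruct (Rlt_le_dec x y) as [| [Hyx | <-]]; [assumption | |].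
  - pose proof (s_of_lt y x Hy Hyx); lra.
  - lra.
Qed.

Lemma s_of_surj s : 0 < s -> exists r, 0 < r /\ s_of N r = s.
Proof.
  intros Hs.
  assert (Hm : 0 < INR (N - 2)) by (apply lt_0_INR; lia).
  assert (Hk : 0 < s ^ (N - 2)) by (apply pow_lt; lra).
  destruct (tail_int_surj (/ (INR (N - 2) * s ^ (N - 2)))) as [r [Hr HT]].
  { apply Rinv_0_lt_compat; nra. }
  exists r; split; [assumption |].
  unfold s_of, Rpower.
  rewrite HT, Rinv_mult, <- Rmult_assoc, Rinv_r, Rmult_1_l, ln_Rinv, ln_pow by lra.
  replace (- / INR (N - 2) * - (INR (N - 2) * ln s)) with (ln s) by (field; lra).
  now apply exp_ln.
Qed.

Lemma r_of_spec s : 0 < s -> 0 < r_of N s /\ s_of N (r_of N s) = s.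
Proof. intros Hs; unfold r_of; apply epsilon_spec, s_of_surj, Hs. Qed.

Lemma r_of_s_of r : 0 < r -> r_of N (s_of N r) = r.
Proof.
  intros Hr; destruct (r_of_spec (s_of N r) (s_of_pos r)) as [H1 H2].
  destruct (Rtotal_order (r_of N (s_of N r)) r) as [Hlt | [Heq | Hgt]]; [| assumption |].
  - apply s_of_lt in Hlt; lra.
  - apply s_of_lt in Hgt; lra.
Qed.

Lemma continuity_pt_r_of s : 0 < s -> continuity_pt (r_of N) s.
Proof.
  intros Hs; destruct (r_of_spec s Hs) as [Hr Hsr].
  apply (Ranalysis5.continuity_pt_recip_prelim (s_of N) (r_of N) (r_of N s / 2) (2 * r_of N s)).
  - lra.
  - intros x y Hx Hxy _; apply s_of_lt; lra.
  - intros x Hx; unfold comp, id; apply r_of_s_of; lra.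
  - intros x Hx; apply continuity_pt_filterlim, continuous_s_of; lra.
  - rewrite <- Hsr at 2 3; split; apply s_of_lt; lra.
Qed.

End Substitution.

(** * A pointwise Rellich identity in hyperbolic radial coordinates *)

(* [S] and [C] stand for [sinh r] and [cosh r], kept as independent variables so that the
   identity below is checked by [field]; [twisted_deriv] is [S^(-n/2) (S^(n/2) u)']. *)
Definition twisted_deriv (n S C u0 u1 : R) : R := u1 + n / 2 * (C / S) * u0.

Definition rellich_flux (n r S C u0 u1 : R) : R :=
  let y := twisted_deriv n S C u0 u1 in
  - 2 * (n ^ 2 / 4) * u0 * y + (n ^ 2 / 4) * u0 ^ 2 / r + y ^ 2 / (2 * r)
  + 3 / 8 * u0 ^ 2 / r ^ 3 - 2 * (n * (n - 2) / 4) * u0 * y / S ^ 2.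

Definition rellich_form (n r S C u0 u1 u2 : R) : R :=
  (u2 + n * (C / S) * u1) ^ 2 - (n ^ 2 / 4) ^ 2 * u0 ^ 2 - 9 / 16 * u0 ^ 2 / r ^ 4
  - (n ^ 2 / 4) / 2 * u0 ^ 2 / r ^ 2.

(* The coefficient of [u0^2] is nonnegative iff [c >= 2], i.e. [n >= 4]: this is where
   [N >= 5] is needed. *)
Definition rellich_sos (n r S C u0 u1 u2 : R) : R :=
  let c := n * (n - 2) / 4 in
  let y := twisted_deriv n S C u0 u1 in
  let z := u2 - n / 2 * u0 / S ^ 2 + n / 2 * (C / S) * u1 + n / 2 * (C / S) * y in
  (z - y / (2 * r)) ^ 2 + / 4 * (y - 3 * u0 / (2 * r)) ^ 2 / r ^ 2
  + 2 * c * (y - C * u0 / S) ^ 2 / S ^ 2 + 2 * (n ^ 2 / 4) * (y - u0 / (2 * r)) ^ 2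
  + u0 ^ 2 * ((c ^ 2 - 2 * c) / S ^ 4 + 2 * c * (n ^ 2 / 4 - 1) / S ^ 2).

Lemma rellich_sos_nonneg n r S C u0 u1 u2 :
  4 <= n -> 0 < r -> 0 < S -> 0 <= rellich_sos n r S C u0 u1 u2.
Proof.
  intros Hn Hr HS. unfold rellich_sos. cbv zeta.
  set (c := n * (n - 2) / 4). set (y := twisted_deriv n S C u0 u1).
  assert (Hc : 2 <= c) by (unfold c; nra).
  assert (HS2 : 0 < / S ^ 2) by (apply Rinv_0_lt_compat, pow_lt; lra).
  assert (HS4 : 0 < / S ^ 4) by (apply Rinv_0_lt_compat, pow_lt; lra).
  assert (Hr2 : 0 < / r ^ 2) by (apply Rinv_0_lt_compat, pow_lt; lra).
  assert (Hk : 0 <= (c ^ 2 - 2 * c) / S ^ 4 + 2 * c * (n ^ 2 / 4 - 1) / S ^ 2).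
  { assert (3 <= n ^ 2 / 4 - 1) by nra.
    unfold Rdiv; apply Rplus_le_le_0_compat; apply Rmult_le_pos; nra. }
  set (k := (c ^ 2 - 2 * c) / S ^ 4 + 2 * c * (n ^ 2 / 4 - 1) / S ^ 2) in *.
  repeat match goal with
  | |- 0 <= _ + _ => apply Rplus_le_le_0_compat
  | |- 0 <= _ ^ 2 => apply pow2_ge_0
  | |- 0 <= _ * _ => apply Rmult_le_pos
  | |- 0 <= _ / _ => apply Rmult_le_pos
  end; lra.
Qed.

Section Flux.

Variables (N : nat) (u0 u1 u2 : R -> R) (r : R).
Hypothesis HN : (2 <= N)%nat.
Hypothesis Hr : 0 < r.
Hypothesis Hu0 : is_derive u0 r (u1 r).
Hypothesis Hu1 : is_derive u1 r (u2 r).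

Lemma is_derive_rellich_flux :
  is_derive
    (fun x => sinh x ^ (N - 1) * rellich_flux (INR (N - 1)) x (sinh x) (cosh x) (u0 x) (u1 x)) r
    (sinh r ^ (N - 1) * rellich_form (INR (N - 1)) r (sinh r) (cosh r) (u0 r) (u1 r) (u2 r)
     - sinh r ^ (N - 1) * rellich_sos (INR (N - 1)) r (sinh r) (cosh r) (u0 r) (u1 r) (u2 r)).
Proof.
  assert (Hs := sinh_pos r Hr).
  assert (Hs' : exp r - exp (- r) > 0) by (unfold sinh in Hs; lra).
  unfold rellich_flux, twisted_deriv. cbv zeta.
  replace (N - 1)%nat with (S (N - 2)) by lia.
  auto_derive.
  { repeat split; try (eexists; eassumption);
      repeat apply Rmult_integral_contrapositive_currified; lra. }
  replace (Derive (fun x => u0 x) r) with (u1 r) by (symmetry; now apply is_derive_unique).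
  replace (Derive (fun x => u1 x) r) with (u2 r) by (symmetry; now apply is_derive_unique).
  unfold rellich_form, rellich_sos, twisted_deriv. cbv zeta.
  change (match (N - 2)%nat with 0%nat => 1 | S _ => INR (N - 2) + 1 end) with (INR (S (N - 2))).
  remember (INR (S (N - 2))) as n.
  unfold sinh, cosh in *. rewrite exp_Ropp in *.
  rewrite <- !tech_pow_Rmult.
  remember (((exp r - / exp r) / 2) ^ (N - 2)) as P.
  assert (1 < exp r) by (rewrite <- exp_0; now apply exp_increasing).
  assert (exp r * exp r - 1 <> 0) by nra.
  field. repeat split; lra.
Qed.

End Flux.

(** * Pulling the inequality back to hyperbolic radial coordinates *)

Section Integrands.

Variables (N : nat) (v : R -> R) (s : R).
Hypothesis HN : (3 <= N)%nat.
Hypothesis Hv : smooth v.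
Hypothesis Hs : 0 < s.

Lemma continuity_pt_rho :
  continuity_pt (fun y => rho N y) s /\ rho N s <> 0.
Proof.
  destruct (r_of_spec N HN s Hs) as [Hr _].
  assert (Hsinh : continuity_pt (fun y => sinh (r_of N y)) s).
  { apply (continuity_pt_comp (r_of N) sinh); [now apply continuity_pt_r_of |].
    apply derivable_continuous_pt, derivable_pt_sinh. }
  pose proof (sinh_pos _ Hr).
  unfold rho, Rdiv; split; [continuity_pt_tac; lra |].
  apply pow_nonzero, Rmult_integral_contrapositive_currified; [lra | apply Rinv_neq_0_compat; lra].
Qed.

Lemma continuity_pt_integrands :
  continuity_pt (fun y => / rho N y * lap N v y ^ 2 * y ^ (N - 1)) s /\
  continuity_pt (fun y => rho N y * v y ^ 2 * y ^ (N - 1)) s /\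
  continuity_pt (fun y => rho N y / r_of N y ^ 4 * v y ^ 2 * y ^ (N - 1)) s /\
  continuity_pt (fun y => rho N y / r_of N y ^ 2 * v y ^ 2 * y ^ (N - 1)) s.
Proof.
  destruct continuity_pt_rho as [Hrho Hrho0].
  destruct (r_of_spec N HN s Hs) as [Hr _].
  assert (continuity_pt (r_of N) s) by now apply continuity_pt_r_of.
  assert (continuity_pt v s) by exact (continuity_pt_Derive_n v 0 s Hv).
  assert (continuity_pt (Derive v) s) by exact (continuity_pt_Derive_n v 1 s Hv).
  assert (continuity_pt (Derive_n v 2) s) by exact (continuity_pt_Derive_n v 2 s Hv).
  assert (r_of N s ^ 4 <> 0) by (apply pow_nonzero; lra).
  assert (r_of N s ^ 2 <> 0) by (apply pow_nonzero; lra).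
  unfold lap, Rdiv; repeat split; continuity_pt_tac; lra.
Qed.

End Integrands.

Definition rellich_gap (N : nat) (v : R -> R) (s : R) : R :=
  / rho N s * lap N v s ^ 2 * s ^ (N - 1)
  - (INR (N - 1) ^ 4 / 16 * (rho N s * v s ^ 2 * s ^ (N - 1))
     + 9 / 16 * (rho N s / r_of N s ^ 4 * v s ^ 2 * s ^ (N - 1))
     + INR (N - 1) ^ 2 / 8 * (rho N s / r_of N s ^ 2 * v s ^ 2 * s ^ (N - 1))).

Definition s_deriv2 (N : nat) (r : R) : R :=
  INR (N - 1) * s_of N r ^ (N - 2) * s_deriv N r * csch_pow N r
  - INR (N - 1) * s_of N r ^ (N - 1) * cosh r / (sinh r * sinh r ^ (N - 1)).

Definition pullback (N : nat) (v : R -> R) (r : R) : R := v (s_of N r).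
Definition pullback_d1 (N : nat) (v : R -> R) (r : R) : R := Derive v (s_of N r) * s_deriv N r.
Definition pullback_d2 (N : nat) (v : R -> R) (r : R) : R :=
  Derive_n v 2 (s_of N r) * s_deriv N r ^ 2 + Derive v (s_of N r) * s_deriv2 N r.

Section Pullback.

Variables (N : nat) (v : R -> R) (r : R).
Hypothesis HN : (3 <= N)%nat.
Hypothesis Hv : smooth v.
Hypothesis Hr : 0 < r.

Lemma is_derive_s_deriv : is_derive (s_deriv N) r (s_deriv2 N r).
Proof.
  assert (Hs := sinh_pos r Hr).
  assert (Hd := is_derive_s_of N HN r Hr).
  assert (Hs' : exp r - exp (- r) > 0) by (unfold sinh in Hs; lra).
  unfold s_deriv, s_deriv2, csch_pow.
  replace (N - 1)%nat with (S (N - 2)) by lia.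
  auto_derive.
  { repeat split; try (eexists; eassumption);
      repeat apply Rmult_integral_contrapositive_currified; try apply pow_nonzero; lra. }
  replace (Derive (fun x => s_of N x) r) with (s_deriv N r)
    by (symmetry; now apply is_derive_unique).
  unfold s_deriv, csch_pow. replace (N - 1)%nat with (S (N - 2)) by lia.
  change (match (N - 2)%nat with 0%nat => 1 | S _ => INR (N - 2) + 1 end) with (INR (S (N - 2))).
  remember (INR (S (N - 2))) as n.
  unfold cosh, sinh in *. rewrite exp_Ropp in *.
  rewrite <- !tech_pow_Rmult.
  remember (((exp r - / exp r) / 2) ^ (N - 2)) as P.
  assert (P <> 0) by (subst P; apply pow_nonzero; lra).
  assert (1 < exp r) by (rewrite <- exp_0; now apply exp_increasing).
  assert (exp r * exp r - 1 <> 0) by nra.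
  field. repeat split; lra.
Qed.

Lemma continuous_s_deriv : continuous (s_deriv N) r.
Proof. apply ex_derive_continuous_R; eexists; apply is_derive_s_deriv. Qed.

Lemma is_derive_pullback : is_derive (pullback N v) r (pullback_d1 N v r).
Proof.
  unfold pullback, pullback_d1.
  assert (H1 : is_derive v (s_of N r) (Derive v (s_of N r))) by apply Derive_correct, (Hv 1%nat).
  assert (H2 := is_derive_s_of N HN r Hr).
  auto_derive; [repeat split; eexists; eassumption |].
  replace (Derive (fun x => s_of N x) r) with (s_deriv N r)
    by (symmetry; now apply is_derive_unique).
  rewrite Rmult_1_l; apply Rmult_comm.
Qed.

Lemma is_derive_pullback_d1 : is_derive (pullback_d1 N v) r (pullback_d2 N v r).
Proof.
  unfold pullback_d1, pullback_d2.
  assert (H1 : is_derive (Derive v) (s_of N r) (Derive_n v 2 (s_of N r)))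
    by apply Derive_correct, (Hv 2%nat).
  assert (H2 := is_derive_s_of N HN r Hr).
  assert (H3 := is_derive_s_deriv).
  auto_derive; [repeat split; eexists; eassumption |].
  replace (Derive (fun x => s_of N x) r) with (s_deriv N r)
    by (symmetry; now apply is_derive_unique).
  replace (Derive (fun x => s_deriv N x) r) with (s_deriv2 N r)
    by (symmetry; now apply is_derive_unique).
  replace (Derive (fun x => Derive v x) (s_of N r)) with (Derive_n v 2 (s_of N r))
    by (symmetry; now apply is_derive_unique).
  ring.
Qed.

Lemma rellich_gap_pullback :
  s_deriv N r * rellich_gap N v (s_of N r) =
  sinh r ^ (N - 1) * rellich_form (INR (N - 1)) r (sinh r) (cosh r)
    (pullback N v r) (pullback_d1 N v r) (pullback_d2 N v r).
Proof.
  assert (Hs := sinh_pos r Hr). assert (Hsig := s_of_pos N r).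
  unfold rellich_gap, rho, lap. rewrite r_of_s_of by assumption.
  unfold pullback, pullback_d1, pullback_d2, s_deriv2, s_deriv, csch_pow, rellich_form.
  rewrite pow_sqr. unfold Rdiv. rewrite !Rpow_mult_distr, !pow_inv.
  replace (N - 1)%nat with (S (N - 2)) by lia.
  rewrite <- !tech_pow_Rmult.
  remember (INR (S (N - 2))) as n.
  remember (sinh r ^ (N - 2)) as P. remember (s_of N r ^ (N - 2)) as Q.
  remember (s_of N r) as sg. remember (sinh r) as S.
  assert (P <> 0) by (subst; apply pow_nonzero; lra).
  assert (Q <> 0) by (subst; apply pow_nonzero; lra).
  field. repeat split; lra.
Qed.

End Pullback.

Section RellichGap.

Variables (N : nat) (v : R -> R) (a b : R).
Hypothesis HN : (3 <= N)%nat.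
Hypothesis Hv : smooth v.
Hypothesis Ha : 0 < a.
Hypothesis Hab : a < b.

Lemma ex_RInt_of_continuity_pt (f : R -> R) :
  (forall s, 0 < s -> continuity_pt f s) -> ex_RInt f a b.
Proof.
  intros Hf; apply ex_RInt_R; intros z Hz; apply continuity_pt_filterlim, Hf.
  rewrite Rmin_left in Hz; lra.
Qed.

Lemma RInt_rellich_gap :
  RInt (rellich_gap N v) a b =
  RInt (fun s => / rho N s * lap N v s ^ 2 * s ^ (N - 1)) a b
  - (INR (N - 1) ^ 4 / 16 * RInt (fun s => rho N s * v s ^ 2 * s ^ (N - 1)) a b
     + 9 / 16 * RInt (fun s => rho N s / r_of N s ^ 4 * v s ^ 2 * s ^ (N - 1)) a b
     + INR (N - 1) ^ 2 / 8 * RInt (fun s => rho N s / r_of N s ^ 2 * v s ^ 2 * s ^ (N - 1)) a b).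
Proof.
  pose proof (fun s Hs => continuity_pt_integrands N v s HN Hv Hs) as Hc.
  apply RInt_sub_lin3; apply ex_RInt_of_continuity_pt; intros s Hs; apply Hc, Hs.
Qed.

Lemma continuity_pt_rellich_gap s : 0 < s -> continuity_pt (rellich_gap N v) s.
Proof.
  intros Hs; destruct (continuity_pt_integrands N v s HN Hv Hs) as [H1 [H2 [H3 H4]]].
  unfold rellich_gap, Rdiv in *; continuity_pt_tac.
Qed.

Lemma RInt_rellich_gap_change_var :
  RInt (rellich_gap N v) a b =
  RInt (fun r => s_deriv N r * rellich_gap N v (s_of N r)) (r_of N a) (r_of N b).
Proof.
  destruct (r_of_spec N HN a Ha) as [Hra Hsa].
  destruct (r_of_spec N HN b ltac:(lra)) as [Hrb Hsb].
  assert (Hrab : r_of N a < r_of N b) by (apply (s_of_lt_iff N HN); lra).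
  rewrite <- Hsa at 1; rewrite <- Hsb at 1.
  symmetry; apply RInt_comp_R; intros x Hx; rewrite Rmin_left in Hx by lra.
  - apply continuity_pt_filterlim, continuity_pt_rellich_gap, s_of_pos.
  - split; [apply is_derive_s_of | apply continuous_s_deriv]; try assumption; lra.
Qed.

End RellichGap.

Section HyperbolicRellich.

Variables (N : nat) (v : R -> R) (a b : R).
Hypothesis HN : (5 <= N)%nat.
Hypothesis Hv : smooth v.
Hypothesis Hsupp : forall x, x < a \/ b < x -> v x = 0.
Hypothesis Ha : 0 < a.
Hypothesis Hab : a < b.

Lemma rellich_flux_pullback_boundary c :
  c = a \/ c = b ->
  sinh (r_of N c) ^ (N - 1) *
  rellich_flux (INR (N - 1)) (r_of N c) (sinh (r_of N c)) (cosh (r_of N c))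
    (pullback N v (r_of N c)) (pullback_d1 N v (r_of N c)) = 0.
Proof.
  intros Hc.
  destruct (r_of_spec N ltac:(lia) c ltac:(destruct Hc; lra)) as [_ Hs].
  destruct (smooth_support_boundary v a b c Hv Hsupp Hc) as [Hv0 Hdv0].
  unfold rellich_flux, twisted_deriv, pullback, pullback_d1.
  rewrite Hs, Hv0, Hdv0; unfold Rdiv; ring.
Qed.

Lemma RInt_rellich_gap_pullback_ge_0 :
  0 <= RInt (fun r => s_deriv N r * rellich_gap N v (s_of N r)) (r_of N a) (r_of N b).
Proof.
  assert (HN3 : (3 <= N)%nat) by lia.
  destruct (r_of_spec N HN3 a Ha) as [Hra Hsa].
  destruct (r_of_spec N HN3 b ltac:(lra)) as [Hrb Hsb].
  apply (RInt_ge_0_of_flux _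
    (fun x => sinh x ^ (N - 1) *
       rellich_flux (INR (N - 1)) x (sinh x) (cosh x) (pullback N v x) (pullback_d1 N v x))
    (fun x => sinh x ^ (N - 1) *
       rellich_sos (INR (N - 1)) x (sinh x) (cosh x)
         (pullback N v x) (pullback_d1 N v x) (pullback_d2 N v x))).
  - split; [assumption | apply (s_of_lt_iff N HN3); lra].
  - intros r Hr.
    apply (continuous_mult (s_deriv N) (fun x => rellich_gap N v (s_of N x)));
      [now apply continuous_s_deriv |].
    apply (continuous_comp (s_of N) (rellich_gap N v)); [now apply continuous_s_of |].
    apply continuity_pt_filterlim, continuity_pt_rellich_gap, s_of_pos; assumption.
  - intros r Hr; rewrite rellich_gap_pullback by assumption.
    apply is_derive_rellich_flux; [lia | assumption | |];
      [apply is_derive_pullback | apply is_derive_pullback_d1]; assumption.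
  - intros r Hr; apply Rmult_le_pos; [apply pow_le; left; now apply sinh_pos |].
    apply rellich_sos_nonneg; [| assumption | now apply sinh_pos].
    replace 4 with (INR 4) by (simpl; ring); apply le_INR; lia.
  - apply rellich_flux_pullback_boundary; now left.
  - apply rellich_flux_pullback_boundary; now right.
Qed.

End HyperbolicRellich.

Theorem proposition6p3 (N : nat) (HN : (5 <= N)%nat)
  (v : R -> R) (a b : R) (Ha : 0 < a) (Hab : a < b)
  (Hv : smooth v) (Hsupp : forall x, x < a \/ b < x -> v x = 0) :
  RInt (fun s => / rho N s * (lap N v s) ^ 2 * s ^ (N - 1)) a b >=
    (INR (N - 1)) ^ 4 / 16 * RInt (fun s => rho N s * (v s) ^ 2 * s ^ (N - 1)) a b
  + 9 / 16 * RInt (fun s => rho N s / (r_of N s) ^ 4 * (v s) ^ 2 * s ^ (N - 1)) a b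
  + (INR (N - 1)) ^ 2 / 8 * RInt (fun s => rho N s / (r_of N s) ^ 2 * (v s) ^ 2 * s ^ (N - 1)) a b.
Proof.
  assert (HN3 : (3 <= N)%nat) by lia.
  pose proof (RInt_rellich_gap N v a b HN3 Hv Ha Hab) as Hgap.
  rewrite (RInt_rellich_gap_change_var N v a b HN3 Hv Ha Hab) in Hgap.
  pose proof (RInt_rellich_gap_pullback_ge_0 N v a b HN Hv Hsupp Ha Hab).
  lra.
Qed.
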